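(* Let $(X,\sigma)$ be a Toeplitz subshift with period structure $(p_n)$. Then $\operatorname{Aut}^{(\infty)}(X,\sigma)$ is the direct limit of the sequence $$\operatorname{Aut}(X,\sigma)\hookrightarrow\operatorname{Aut}(X,\sigma^{p_1})\hookrightarrow\operatorname{Aut}(X,\sigma^{p_2})\hookrightarrow\operatorname{Aut}(X,\sigma^{p_3})\hookrightarrow\cdots$$ where the maps are the natural inclusions; equivalently $\operatorname{Aut}^{(\infty)}(X,\sigma)=\operatorname{Aut}(X,\sigma)\cup\bigcup_{n\ge1}\operatorname{Aut}(X,\sigma^{p_n})$ inside $\operatorname{Homeo}(X)$.
   Context: Let $\mathcal{A}$ be a finite alphabet and $\sigma$ the left shift on $\mathcal{A}^{\mathbb{Z}}$. A Toeplitz sequence $u$ is one such that for every $n\in\mathbb{Z}$ there is $m\ge1$ with $u_n=u_{n+km}$ for all $k$; it is assumed non-periodic. With $\operatorname{per}_p(u)=\{k: u_k=u_{k+pm}\ \forall m\}$, a period structure is a sequence $(p_n)$ with $p_n\mid p_{n+1}$, $\bigcup_n\operatorname{per}_{p_n}(u)=\mathbb{Z}$, each $p_n$ essential. The Toeplitz subshift $(X,\sigma)$ is the orbit closure of $u$ with the shift. $\operatorname{Aut}(X,T)$ is the group of homeomorphisms commuting with $T$ and $\operatorname{Aut}^{(\infty)}(X,T)=\bigcup_{n\ge1}\operatorname{Aut}(X,T^n)\subseteq\operatorname{Homeo}(X)$. *)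

From mathcomp Require Import all_boot.
From Stdlib Require Import ZArith.

Set Implicit Arguments.
Unset Strict Implicit.

Open Scope Z_scope.

Definition seqZ (A : finType) := Z -> A.

Definition shiftn (A : finType) (n : Z) (x : seqZ A) : seqZ A := fun i => x (i + n).

Definition toeplitz (A : finType) (u : seqZ A) : Prop :=
  forall n : Z, exists m : Z, 1 <= m /\ forall k : Z, u n = u (n + k * m).

Definition periodic (A : finType) (u : seqZ A) : Prop :=
  exists p : Z, 1 <= p /\ forall n : Z, u (n + p) = u n.

Definition per (A : finType) (u : seqZ A) (p : Z) (k : Z) : Prop :=
  forall m : Z, u k = u (k + p * m).

(* p is an essential period: per_p(u) is nonempty and the p-skeleton of u
   is not periodic with any smaller period 0 < q < p. *)
Definition essential (A : finType) (u : seqZ A) (p : Z) : Prop :=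
  1 <= p /\ (exists k, per u p k) /\
  forall q : Z, 1 <= q < p ->
    ~ (forall k : Z, (per u p k <-> per u p (k + q)) /\
                     (per u p k -> u k = u (k + q))).

(* Period structure (p_1, p_2, ...) represented as p : nat -> Z, p 0 = p_1. *)
Definition period_structure (A : finType) (u : seqZ A) (p : nat -> Z) : Prop :=
  (forall n, (p n | p (S n))) /\
  (forall k : Z, exists n, per u (p n) k) /\
  (forall n, essential u (p n)).

(* Orbit closure of u under the shift, for the product topology on A^Z
   (A discrete): x is in it iff every central window of x occurs in u,
   i.e. every cylinder neighbourhood of x meets the orbit of u. *)
Definition in_orbit_closure (A : finType) (u : seqZ A) (x : seqZ A) : Prop :=
  forall N : Z, exists k : Z, forall i : Z, -N <= i <= N -> x i = shiftn k u i.

Definition subshift (A : finType) (u : seqZ A) : Type := { x : seqZ A | in_orbit_closure u x }.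

Definition continuousX (A : finType) (u : seqZ A) (f : subshift u -> subshift u) : Prop :=
  forall (x : subshift u) (N : Z), exists M : Z, forall y : subshift u,
    (forall i, -M <= i <= M -> proj1_sig y i = proj1_sig x i) ->
    forall i, -N <= i <= N -> proj1_sig (f y) i = proj1_sig (f x) i.

(* f commutes with sigma^n on X (X is shift invariant, so this says
   f o sigma^n = sigma^n o f on X). *)
Definition commutes_pow (A : finType) (u : seqZ A) (f : subshift u -> subshift u) (n : Z) : Prop :=
  forall x y : subshift u, proj1_sig y = shiftn n (proj1_sig x) ->
    proj1_sig (f y) = shiftn n (proj1_sig (f x)).

Definition homeoX (A : finType) (u : seqZ A) (f g : subshift u -> subshift u) : Prop :=
  (forall x, g (f x) = x) /\ (forall x, f (g x) = x) /\ continuousX f /\ continuousX g.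

Definition in_Aut (A : finType) (u : seqZ A) (f : subshift u -> subshift u) (n : Z) : Prop :=
  (exists g, homeoX f g) /\ commutes_pow f n.

Definition in_Aut_infty (A : finType) (u : seqZ A) (f : subshift u -> subshift u) : Prop :=
  exists n : Z, 1 <= n /\ in_Aut f n.

(** The heart of the matter is that a continuous [f] commuting with [σ^m] already
    commutes with some [σ^(p_N)]. Every window of [u] is [p_n]-periodic for large [n],
    so continuity and [f ∘ σ^m = σ^m ∘ f] make every coordinate of [f (σ^j u)]
    [m p_n]-periodic; since [f (σ^j u)] lies in [X], this improves to
    [p_n']-periodicity. Choose [N] with [gcd(m, p_n) = gcd(m, p_N)] for all [n ≥ N];
    then [m s ≡ p_N (mod p_n)] is solvable, and continuity yields
    [f (σ^(j + p_N) u) = σ^(p_N) (f (σ^j u))]. The orbit of [u] is dense, so [f]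
    commutes with [σ^(p_N)]. Only the divisibility chain and [⋃ per_(p_n)(u) = ℤ] are
    used. *)

From mathcomp Require Import all_boot.
From Stdlib Require Import ZArith Lia Classical FunctionalExtensionality ProofIrrelevance.
Open Scope Z_scope.

Lemma nondecreasing_le (a : nat -> Z) :
  (forall n, a n <= a (S n)) -> forall n n', (n <= n')%coq_nat -> a n <= a n'.
Proof. move=> Ha n n'; elim=> [|k _ IH]; [lia | have := Ha k; lia]. Qed.

Lemma nondecreasing_bounded_stationary (a : nat -> Z) (B : Z) :
  (forall n, a n <= a (S n)) -> (forall n, a n <= B) ->
  exists N, forall n, (N <= n)%coq_nat -> a n = a N.
Proof.
  move=> Ha HB.
  have [d Hd] : exists d : nat, B - a 0%nat <= Z.of_nat d
    by exists (Z.to_nat (B - a 0%nat)); lia.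
  elim: d a Ha HB Hd => [|d IH] a Ha HB Hd;
    (case: (classic (exists n, a n <> a 0%nat)) => [[n Hn]|Hconst];
     [ have Hlt : a 0%nat < a n by (have := nondecreasing_le a Ha 0 n (le_0_n n); lia)
     | exists 0%nat => n _; apply: NNPP => Hn; apply: Hconst; by exists n ]).
  - have := HB n. lia.
  - set a' := fun k => a (n + k)%coq_nat.
    have Ha' : forall k, a' k <= a' (S k) by move=> k; rewrite /a' Nat.add_succ_r; exact: Ha.
    have Hd' : B - a' 0%nat <= Z.of_nat d by rewrite /a' Nat.add_0_r; have := HB n; lia.
    have [N HN] := IH a' Ha' (fun k => HB _) Hd'.
    exists (n + N)%coq_nat => k Hk.
    replace k with (n + (k - n)%coq_nat)%coq_nat by lia. apply: HN. lia.
Qed.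

Lemma eventually_uniform_on_interval (Q : Z -> nat -> Prop) (a b : Z) :
  (forall z n n', (n <= n')%coq_nat -> Q z n -> Q z n') ->
  (forall z, a <= z <= b -> exists n, Q z n) ->
  exists n, forall z, a <= z <= b -> Q z n.
Proof.
  move=> Hmono Hev.
  have Hprefix : forall d : nat, a + Z.of_nat d <= b ->
      exists n, forall z, a <= z <= a + Z.of_nat d -> Q z n.
  { elim=> [|d IH] Hd.
    - have [n Hn] := Hev a ltac:(lia).
      exists n => z Hz. by replace z with a by lia.
    - have [n1 Hn1] := IH ltac:(lia).
      have [n2 Hn2] := Hev (a + Z.of_nat (S d)) ltac:(lia).
      exists (Nat.max n1 n2) => z Hz.
      case: (Z.eq_dec z (a + Z.of_nat (S d))) => [->|Hne].
      + apply: (Hmono _ n2); [lia | exact: Hn2].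
      + apply: (Hmono _ n1); [lia | apply: Hn1; lia]. }
  case: (Z_lt_le_dec b a) => Hab.
  - exists 0%nat => z Hz. lia.
  - have [n Hn] := Hprefix (Z.to_nat (b - a)) ltac:(lia).
    exists n => z Hz. apply: Hn. lia.
Qed.

Lemma gcd_pos_l (K P : Z) : 1 <= K -> 1 <= Z.gcd K P.
Proof.
  move=> HK. have := Z.gcd_nonneg K P.
  have : Z.gcd K P <> 0 by move/Z.gcd_eq_0_l; lia.
  lia.
Qed.

Lemma solve_linear_congruence (K P c : Z) : 1 <= P -> (Z.gcd K P | c) ->
  exists s t, 0 <= s < P /\ s * K = c + t * P.
Proof.
  move=> HP [e ->]. have [a [b Hab]] := Z.gcd_bezout K P _ (erefl _).
  have Hdiv := Z.div_mod (a * e) P ltac:(lia).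
  have Hmod := Z.mod_pos_bound (a * e) P ltac:(lia).
  exists ((a * e) mod P), (- b * e - (a * e / P) * K). split; [lia|].
  rewrite -Hab. nia.
Qed.

Lemma per_dvd {A : finType} {v : seqZ A} {a b k : Z} : (a | b) -> per v a k -> per v b k.
Proof. move=> [c ->] Hper t. rewrite (Hper (c * t)). f_equal. ring. Qed.

Lemma shiftnD {A : finType} (a b : Z) (x : seqZ A) : shiftn a (shiftn b x) = shiftn (a + b) x.
Proof. apply functional_extensionality => i. rewrite /shiftn. f_equal. ring. Qed.

Lemma shiftn0 {A : finType} (x : seqZ A) : shiftn 0 x = x.
Proof. apply functional_extensionality => i. by rewrite /shiftn Z.add_0_r. Qed.

Definition agree_on {A : finType} (x y : seqZ A) (N : Z) : Prop :=
  forall i, -N <= i <= N -> x i = y i.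

Lemma agree_on_le {A : finType} (x y : seqZ A) (N N' : Z) :
  N' <= N -> agree_on x y N -> agree_on x y N'.
Proof. move=> HN H i Hi. apply: H. lia. Qed.

Lemma in_orbit_closure_residue {A : finType} (u x : seqZ A) (g : Z) :
  1 <= g -> in_orbit_closure u x ->
  exists r, forall N, exists q, agree_on x (shiftn (r + g * q) u) N.
Proof.
  move=> Hg Hx. apply: NNPP => Hnone.
  (* Otherwise each residue class fails on some window, hence all fail on a common one. *)
  have Hbad : forall r, 0 <= r <= g - 1 ->
      exists N : nat, forall q, ~ agree_on x (shiftn (r + g * q) u) (Z.of_nat N).
  { move=> r _. apply NNPP => Hgood. apply Hnone. exists r => N.
    apply NNPP => HN. apply Hgood. exists (Z.to_nat N) => q Hq. apply HN. exists q.
    apply: agree_on_le Hq. lia. }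
  have [N HN] : exists N : nat, forall r, 0 <= r <= g - 1 ->
      forall q, ~ agree_on x (shiftn (r + g * q) u) (Z.of_nat N).
  { apply: eventually_uniform_on_interval Hbad => r N N' HNN' Hr q Hq.
    apply: (Hr q). apply: agree_on_le Hq. lia. }
  have [k Hk] := Hx (Z.of_nat N).
  have Hdiv := Z.div_mod k g ltac:(lia).
  apply: (HN (k mod g) (ltac:(have := Z.mod_pos_bound k g; lia)) (k / g)).
  by rewrite Z.add_comm -Hdiv.
Qed.

Section Subshift.

Context {A : finType} (u : seqZ A).

Lemma in_orbit_closure_self : in_orbit_closure u u.
Proof. move=> N. exists 0 => i _. by rewrite /shiftn Z.add_0_r. Qed.

Lemma in_orbit_closure_shiftn (n : Z) {x : seqZ A} :
  in_orbit_closure u x -> in_orbit_closure u (shiftn n x).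
Proof.
  move=> Hx N. have [k Hk] := Hx (Z.abs N + Z.abs n). exists (n + k) => i Hi.
  rewrite /shiftn (Hk (i + n)); [|lia]. rewrite /shiftn. f_equal. ring.
Qed.

Lemma subshift_eq (x y : subshift u) : proj1_sig x = proj1_sig y -> x = y.
Proof. case: x => x Hx; case: y => y Hy. exact: subset_eq_compat. Qed.

Definition shiftX (n : Z) (x : subshift u) : subshift u :=
  exist _ (shiftn n (proj1_sig x)) (in_orbit_closure_shiftn n (proj2_sig x)).

Definition orbit_point (j : Z) : subshift u :=
  exist _ (shiftn j u) (in_orbit_closure_shiftn j in_orbit_closure_self).

Lemma commutes_pow0 (f : subshift u -> subshift u) : commutes_pow f 0.
Proof.
  move=> x y Hy. have Hxy : y = x
    by apply: subshift_eq; rewrite Hy shiftn0.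
  by rewrite Hxy shiftn0.
Qed.

Lemma commutes_powD (f : subshift u -> subshift u) (a b : Z) :
  commutes_pow f a -> commutes_pow f b -> commutes_pow f (a + b).
Proof.
  move=> Ha Hb x y Hy.
  have Hfx : proj1_sig (f (shiftX b x)) = shiftn b (proj1_sig (f x)) by apply: Hb.
  have Hfy : proj1_sig (f y) = shiftn a (proj1_sig (f (shiftX b x))).
  { apply: Ha. by rewrite Hy /= shiftnD Z.add_comm. }
  by rewrite Hfy Hfx shiftnD Z.add_comm.
Qed.

Lemma commutes_powN (f : subshift u -> subshift u) (a : Z) :
  commutes_pow f a -> commutes_pow f (- a).
Proof.
  move=> Ha x y Hy.
  have Hx : proj1_sig x = shiftn a (proj1_sig y) by rewrite Hy shiftnD Z.add_opp_diag_r shiftn0.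
  by rewrite (Ha y x Hx) shiftnD Z.add_opp_diag_l shiftn0.
Qed.

Lemma commutes_pow_mul {f : subshift u -> subshift u} {m : Z} (q : Z) :
  commutes_pow f m -> commutes_pow f (m * q).
Proof.
  move=> Hm.
  have Hnonneg : forall k, 0 <= k -> commutes_pow f (m * k).
  { apply: natlike_ind => [|k _ IH].
    - rewrite Z.mul_0_r. exact: commutes_pow0.
    - rewrite Z.mul_succ_r. exact: commutes_powD. }
  case: (Z_le_gt_dec 0 q) => Hq; first exact: Hnonneg.
  replace (m * q) with (- (m * - q)) by ring. apply: commutes_powN. apply: Hnonneg. lia.
Qed.

Lemma in_Aut_dvd {f : subshift u -> subshift u} {a b : Z} :
  (a | b) -> in_Aut f a -> in_Aut f b.
Proof.
  move=> [c ->] [Hhomeo Hcomm]. split; first exact: Hhomeo.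
  rewrite Z.mul_comm. exact: commutes_pow_mul.
Qed.

Lemma commutes_pow_orbit_point {f : subshift u -> subshift u} {n : Z} (j : Z) :
  commutes_pow f n ->
  proj1_sig (f (orbit_point (j + n))) = shiftn n (proj1_sig (f (orbit_point j))).
Proof. move=> Hn. apply: Hn. by rewrite /= shiftnD Z.add_comm. Qed.

Lemma commutes_pow_of_orbit (f : subshift u -> subshift u) (n : Z) : continuousX f ->
  (forall j, proj1_sig (f (orbit_point (j + n))) = shiftn n (proj1_sig (f (orbit_point j)))) ->
  commutes_pow f n.
Proof.
  move=> Hcont Horb x y Hy. apply functional_extensionality => i.
  have [Wy HWy] := Hcont y (Z.abs i).
  have [Wx HWx] := Hcont x (Z.abs (i + n)).
  have [k Hk] := proj2_sig x (Z.abs Wy + Z.abs n + Z.abs Wx).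
  have Hfx : proj1_sig (f (orbit_point k)) (i + n) = proj1_sig (f x) (i + n).
  { apply: HWx; last lia. move=> w Hw. symmetry. apply: Hk. lia. }
  have Hfy : proj1_sig (f (orbit_point (k + n))) i = proj1_sig (f y) i.
  { apply: HWy; last lia. move=> w Hw.
    rewrite Hy /shiftn /= (Hk (w + n)); last lia. rewrite /shiftn. f_equal. ring. }
  by rewrite -Hfy Horb.
Qed.

Lemma orbit_point_agree {q j W : Z} (t : Z) :
  (forall w, -W <= w <= W -> per u q (j + w)) ->
  agree_on (proj1_sig (orbit_point (j + q * t))) (proj1_sig (orbit_point j)) W.
Proof.
  move=> Hper w Hw. rewrite /= /shiftn.
  transitivity (u (j + w + q * t)); first (f_equal; ring).
  rewrite -(Hper w Hw t). f_equal. ring.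
Qed.

Section PeriodStructure.

Variable p : nat -> Z.
Hypothesis p_dvd_succ : forall n, (p n | p (S n)).
Hypothesis p_pos : forall n, 1 <= p n.
Hypothesis per_p_cover : forall k, exists n, per u (p n) k.

Lemma p_dvd_le {n n' : nat} : (n <= n')%coq_nat -> (p n | p n').
Proof.
  elim=> [|k _ IH]; first exact: Z.divide_refl.
  exact: Z.divide_trans IH (p_dvd_succ k).
Qed.

Lemma per_p_window (j W : Z) : exists n, forall w, -W <= w <= W -> per u (p n) (j + w).
Proof.
  have [n Hn] : exists n, forall z, j - W <= z <= j + W -> per u (p n) z.
  { apply: eventually_uniform_on_interval => [z n n' Hle|z _].
    - exact: per_dvd (p_dvd_le Hle).
    - exact: per_p_cover. }
  exists n => w Hw. apply: Hn. lia.
Qed.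

Lemma gcd_p_stationary (K : Z) : 1 <= K ->
  exists N, forall n, (N <= n)%coq_nat -> Z.gcd K (p n) = Z.gcd K (p N).
Proof.
  move=> HK. apply: (nondecreasing_bounded_stationary _ K) => n.
  - apply: Z.divide_pos_le; first (have := gcd_pos_l K (p (S n)) HK; lia).
    apply: Z.gcd_greatest; first exact: Z.gcd_divide_l.
    exact: Z.divide_trans (Z.gcd_divide_r _ _) (p_dvd_succ n).
  - apply: Z.divide_pos_le; first lia. exact: Z.gcd_divide_l.
Qed.

Lemma in_orbit_closure_per {x : seqZ A} {K i : Z} :
  in_orbit_closure u x -> 1 <= K -> per x K i -> exists n, per x (p n) i.
Proof.
  move=> Hx HK Hper.
  (* Windows of [x] come from shifts of [u] in one class modulo [g = gcd(K, p_n)]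
     (for all large [n]); Bezout moves [i] by a multiple of [K] to a position where
     [x] copies a [p_n]-periodic position of [u]. *)
  have [N HN] := gcd_p_stationary K HK.
  set g := Z.gcd K (p N).
  have [r Hr] := in_orbit_closure_residue u x _ (gcd_pos_l K (p N) HK) Hx.
  exists N. apply: (per_dvd (Z.gcd_divide_r K (p N))) => c.
  set z := i + g * c.
  have [q Hq] := Hr (Z.abs z).
  have Hxz : x z = u (z + (r + g * q)) by apply: Hq; lia.
  have [n Hn] := per_p_cover (z + (r + g * q)).
  set P := p (Nat.max n N).
  have HuP : per u P (z + (r + g * q)) by apply: (per_dvd (p_dvd_le _) Hn); lia.
  have HgP : Z.gcd K P = g by apply: HN; lia.
  have [q' Hq'] := Hr (Z.abs i + P * K).
  have [s [t [Hs Hst]]] : exists s t, 0 <= s < P /\ s * K = g * (c + q - q') + t * P.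
  { apply: solve_linear_congruence; first exact: p_pos.
    rewrite HgP. exact: Z.divide_factor_l. }
  rewrite (Hper s) (Hq' (i + K * s)); last nia.
  rewrite Hxz (HuP t) /shiftn /z. f_equal. nia.
Qed.

Section Automorphism.

Variables (f : subshift u -> subshift u) (m : Z).
Hypotheses (m_pos : 1 <= m) (f_cont : continuousX f) (f_comm : commutes_pow f m).

Lemma orbit_image_per_mul (j i : Z) :
  exists n, per (proj1_sig (f (orbit_point j))) (m * p n) i.
Proof.
  have [W HW] := f_cont (orbit_point j) (Z.abs i).
  have [n Hn] := per_p_window j W.
  exists n => t.
  have Hagree := HW _ (orbit_point_agree (m * t) Hn) i ltac:(lia).
  have Hshift := commutes_pow_orbit_point j (commutes_pow_mul (p n * t) f_comm).
  rewrite -Hagree. replace (j + p n * (m * t)) with (j + m * (p n * t)) by ring.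
  rewrite Hshift /shiftn. f_equal. ring.
Qed.

Lemma orbit_image_per (j i : Z) : exists n, per (proj1_sig (f (orbit_point j))) (p n) i.
Proof.
  have [n Hn] := orbit_image_per_mul j i.
  apply: (in_orbit_closure_per (proj2_sig _) _ Hn). have := p_pos n. nia.
Qed.

Lemma orbit_image_shift (N : nat) :
  (forall n, (N <= n)%coq_nat -> Z.gcd m (p n) = Z.gcd m (p N)) ->
  forall j, proj1_sig (f (orbit_point (j + p N))) = shiftn (p N) (proj1_sig (f (orbit_point j))).
Proof.
  move=> HN j. set x := proj1_sig (f (orbit_point j)). apply functional_extensionality => i.
  have [W HW] := f_cont (orbit_point (j + p N)) (Z.abs i).
  have [n1 Hn1] := per_p_window (j + p N) W.
  have [n2 Hn2] := orbit_image_per j (i + p N).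
  set n := Nat.max (Nat.max n1 n2) N.
  have [s [t [_ Hst]]] : exists s t, 0 <= s < p n /\ s * m = p N + t * p n.
  { apply: solve_linear_congruence; first exact: p_pos.
    rewrite HN; last lia. exact: Z.gcd_divide_r. }
  have Hwindow : forall w, -W <= w <= W -> per u (p n) (j + p N + w).
  { move=> w Hw. apply: (per_dvd (p_dvd_le _) (Hn1 w Hw)). lia. }
  have Hagree := HW _ (orbit_point_agree t Hwindow) i ltac:(lia).
  (* [f (σ^(j+P) u)_i = f (σ^(j+ms) u)_i = f (σ^j u)_(i+ms) = f (σ^j u)_(i+P)] *)
  rewrite -Hagree. replace (j + p N + p n * t) with (j + m * s) by nia.
  rewrite (commutes_pow_orbit_point j (commutes_pow_mul s f_comm)) -/x /shiftn.
  transitivity (x (i + p N + p n * t)); first (f_equal; nia).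
  symmetry. apply: (per_dvd (p_dvd_le _) Hn2). lia.
Qed.

Lemma commutes_pow_period : exists n, commutes_pow f (p n).
Proof.
  have [N HN] := gcd_p_stationary m m_pos.
  exists N. apply: commutes_pow_of_orbit f_cont _. exact: orbit_image_shift HN.
Qed.

End Automorphism.

End PeriodStructure.

End Subshift.

Theorem theorem4p3 (A : finType) (u : seqZ A) (p : nat -> Z) :
  toeplitz u -> ~ periodic u -> period_structure u p ->
  (* the natural inclusions of the direct system *)
  ((forall f : subshift u -> subshift u, in_Aut f 1 -> in_Aut f (p O)) /\
   (forall (n : nat) (f : subshift u -> subshift u), in_Aut f (p n) -> in_Aut f (p (S n)))) /\
  (* Aut^(infty) is the union (direct limit) of the chain *)
  (forall f : subshift u -> subshift u,
     in_Aut_infty f <-> (in_Aut f 1 \/ exists n : nat, in_Aut f (p n))).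
Proof.
  move=> _ _ [p_dvd_succ [per_p_cover p_essential]].
  have p_pos : forall n, 1 <= p n by move=> n; exact: proj1 (p_essential n).
  split; [split|].
  - move=> f. exact: in_Aut_dvd (Z.divide_1_l _).
  - move=> n f. exact: in_Aut_dvd (p_dvd_succ n).
  - move=> f. split.
    + move=> [m [m_pos [[g f_homeo] f_comm]]]. right.
      have f_cont : continuousX f := proj1 (proj2 (proj2 f_homeo)).
      have [n Hn] := commutes_pow_period u p p_dvd_succ p_pos per_p_cover f m m_pos f_cont f_comm.
      exists n. split; [exists g | ]; assumption.
    + move=> [Hf | [n Hf]]; [exists 1 | exists (p n)]; split=> //.
Qed.
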